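(* Let $H$ be a bialgebra, $L\in HZ^1(H)$ a 1-cocycle and $\alpha\in H'$. Then $$\phi_{L+\delta\alpha}=\phi_L\circ\theta_{\alpha\circ\phi_L},$$ where $\phi_L,\phi_{L+\delta\alpha}\colon H_R\to H$ and $\theta_{\alpha\circ\phi_L}\colon H_R\to H_R$ are defined below.
   Context: $H_R$ is the Connes–Kreimer Hopf algebra of rooted trees over a field $\mathbb K$ of characteristic zero (basis rooted forests, $B_+$ grafts a forest onto a new root, coproduct with $\Delta\circ B_+=B_+\otimes\mathbb 1+(\mathrm{id}\otimes B_+)\circ\Delta$). For an algebra $\mathcal A$ and $M\in\operatorname{End}(\mathcal A)$, $\phi_M\colon H_R\to\mathcal A$ is the unique unital algebra morphism with $\phi_M\circ B_+=M\circ\phi_M$. For a bialgebra $H$, $HZ^1(H)=\{L\in\operatorname{End}(H):\Delta\circ L=(\mathrm{id}\otimes L)\circ\Delta+L\otimes\mathbb 1\}$, $H'=\operatorname{Hom}(H,\mathbb K)$, and $\delta\alpha:=(\mathrm{id}\otimes\alpha)\circ\Delta-\mathbb 1\cdot\alpha$ for $\alpha\in H'$. For $\beta\in H_R'$, $\theta_\beta:=\phi_{B_++\delta\beta}\colon H_R\to H_R$. *)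

From HB Require Import structures.
From mathcomp Require Import all_boot all_order all_algebra.
Set Implicit Arguments. Unset Strict Implicit. Unset Printing Implicit Defensive.
Import GRing.Theory.
Local Open Scope ring_scope.

(* forests are their isomorphism classes (see [iso] below).            *)
Inductive rtree := RNode of seq rtree.

Fixpoint rtree_enc (t : rtree) : GenTree.tree unit :=
  let: RNode ts := t in GenTree.Node 0 (map rtree_enc ts).

Fixpoint rtree_dec (t : GenTree.tree unit) : rtree :=
  match t with
  | GenTree.Leaf _ => RNode [::]
  | GenTree.Node _ ts => RNode (map rtree_dec ts)
  end.

Fixpoint rtree_encK_aux (t : rtree) : rtree_dec (rtree_enc t) = t :=
  match t return rtree_dec (rtree_enc t) = t with
  | RNode ts => f_equal RNode
      ((fix F (s : seq rtree) : map rtree_dec (map rtree_enc s) = s :=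
          match s return map rtree_dec (map rtree_enc s) = s with
          | [::] => erefl
          | t' :: s' => f_equal2 cons (rtree_encK_aux t') (F s')
          end) ts)
  end.

Lemma rtree_encK : cancel rtree_enc rtree_dec.
Proof. exact: rtree_encK_aux. Qed.

HB.instance Definition _ := Countable.copy rtree (can_type rtree_encK).

(* a total order on planar trees, used only to build canonical forms *)
Definition tle (t u : rtree) : bool := (pickle t <= pickle u)%N.

(* canonical planar representative of a (non-planar) rooted tree *)
Fixpoint canon (t : rtree) : rtree :=
  let: RNode ts := t in RNode (sort tle (map canon ts)).

(* forests are multisets of trees: canonical form of a forest *)
Definition canonF (f : seq rtree) : seq rtree := sort tle (map canon f).

Definition iso (f g : seq rtree) : bool := canonF f == canonF g.

(* the grafting operator B_+ on a forest: the tree RNode f *)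

(* The Connes-Kreimer Hopf algebra H_R as the free K-vector space on   *)
(* isomorphism classes of rooted forests.  An element is represented   *)
(* by a finite formal linear combination of (planar) forests;          *)
(* [eqHR] is equality in H_R (equal coefficients on every class).       *)
Section HR.
Variable K : fieldType.

Definition HR := seq (K * seq rtree).

Definition coefHR (x : HR) (f : seq rtree) : K :=
  \sum_(p <- x | iso p.2 f) p.1.

Definition eqHR (x y : HR) : Prop := forall f, coefHR x f = coefHR y f.

Definition oneHR : HR := [:: (1, [::])].
Definition addHR (x y : HR) : HR := x ++ y.
(* product: disjoint union of forests, extended bilinearly *)
Definition mulHR (x y : HR) : HR :=
  [seq (p.1 * q.1, p.2 ++ q.2) | p <- x, q <- y].
Definition bplusHR (x : HR) : HR := [seq (p.1, [:: RNode p.2]) | p <- x].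

Definition extHR (V : lmodType K) (g : seq rtree -> V) (x : HR) : V :=
  \sum_(p <- x) p.1 *: g p.2.
Definition extK (g : seq rtree -> K) (x : HR) : K :=
  \sum_(p <- x) p.1 * g p.2.

(* Coproduct of H_R on basis forests, as a list of pairs (f1, f2)     *)
(* standing for sum of f1 (x) f2 (all coefficients 1), defined by       *)
(*   Delta (B_+ f) = B_+ f (x) 1 + (id (x) B_+) Delta f,                *)
(*   Delta multiplicative, Delta 1 = 1 (x) 1.                           *)
End HR.

Fixpoint copT (t : rtree) : seq (seq rtree * seq rtree) :=
  let: RNode ts := t in
  ([:: t], [::]) ::
  [seq (p.1, [:: RNode p.2]) |
     p <- foldr (fun u acc => [seq (p.1 ++ q.1, p.2 ++ q.2) | p <- copT u, q <- acc])
                [:: ([::], [::])] ts].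

Definition copF (f : seq rtree) : seq (seq rtree * seq rtree) :=
  foldr (fun u acc => [seq (p.1 ++ q.1, p.2 ++ q.2) | p <- copT u, q <- acc])
        [:: ([::], [::])] f.

Section HR2.
Variable K : fieldType.

(* delta beta = (id (x) beta) o Delta - 1 . beta, on H_R, for beta in H_R' *)
(* (a linear functional on H_R is given by its values on basis forests)   *)
Definition deltaHR (beta : seq rtree -> K) (x : HR K) : HR K :=
  flatten [seq [seq (p.1 * beta q.2, q.1) | q <- copF p.2] | p <- x]
  ++ [:: (- extK beta x, [::])].

(* theta_beta = phi_{B_+ + delta beta} : H_R -> H_R, given on basis forests:   *)
Definition is_theta (beta : seq rtree -> K) (th : seq rtree -> HR K) : Prop :=
  [/\ forall f f', iso f f' -> eqHR (th f) (th f'),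
      eqHR (th [::]) (oneHR K),
      forall f f', eqHR (th (f ++ f')) (mulHR (th f) (th f')) &
      forall f, eqHR (th [:: RNode f])
                     (addHR (bplusHR (th f)) (deltaHR beta (th f)))].

(* phi_M : H_R -> A for an algebra A and M : A -> A, given on basis forests *)
Definition is_phi (A : algType K) (M : A -> A) (g : seq rtree -> A) : Prop :=
  [/\ forall f f', iso f f' -> g f = g f',
      g [::] = 1,
      forall f f', g (f ++ f') = g f * g f' &
      forall f, g [:: RNode f] = M (g f)].

(* Tensors.  MathComp has no tensor products; an element of U (x) V is *)
(* represented by a finite list of simple tensors, and two lists are   *)
(* equal in U (x) V iff every bilinear map agrees on them (universal   *)
(* property of the tensor product); same for triple tensors.           *)
Definition bilin (U V W : lmodType K) (B : U -> V -> W) : Prop :=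
  (forall v a u1 u2, B (a *: u1 + u2) v = a *: B u1 v + B u2 v) /\
  (forall u a v1 v2, B u (a *: v1 + v2) = a *: B u v1 + B u v2).

Definition teq2 (U V : lmodType K) (s t : seq (U * V)) : Prop :=
  forall (W : lmodType K) (B : U -> V -> W), bilin B ->
    \sum_(p <- s) B p.1 p.2 = \sum_(p <- t) B p.1 p.2.

Definition trilin (U V X W : lmodType K) (T : U -> V -> X -> W) : Prop :=
  (forall v x a u1 u2, T (a *: u1 + u2) v x = a *: T u1 v x + T u2 v x) /\
  (forall u x a v1 v2, T u (a *: v1 + v2) x = a *: T u v1 x + T u v2 x) /\
  (forall u v a x1 x2, T u v (a *: x1 + x2) = a *: T u v x1 + T u v x2).

Definition teq3 (U V X : lmodType K) (s t : seq (U * V * X)) : Prop :=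
  forall (W : lmodType K) (T : U -> V -> X -> W), trilin T ->
    \sum_(p <- s) T p.1.1 p.1.2 p.2 = \sum_(p <- t) T p.1.1 p.1.2 p.2.

Definition linmap (U V : lmodType K) (f : U -> V) : Prop :=
  forall a x y, f (a *: x + y) = a *: f x + f y.
Definition linform (U : lmodType K) (f : U -> K) : Prop :=
  forall a x y, f (a *: x + y) = a * f x + f y.

Definition is_bialgebra (H : algType K) (D : H -> seq (H * H)) (e : H -> K)
  : Prop :=
  [/\ (forall a x y, teq2 (D (a *: x + y)) ([seq (a *: p.1, p.2) | p <- D x] ++ D y)),
      (forall x, teq3
         (flatten [seq [seq (q.1, q.2, p.2) | q <- D p.1] | p <- D x])
         (flatten [seq [seq (p.1, q.1, q.2) | q <- D p.2] | p <- D x])),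
      (forall x, \sum_(p <- D x) e p.1 *: p.2 = x /\
                 \sum_(p <- D x) e p.2 *: p.1 = x),
      (forall x y, teq2 (D (x * y)) [seq (p.1 * q.1, p.2 * q.2) | p <- D x, q <- D y]
                   /\ teq2 (D 1) [:: (1, 1)]) &
      [/\ linform e, (forall x y, e (x * y) = e x * e y) & e 1 = 1]].

(* HZ^1(H): Delta o L = (id (x) L) o Delta + L (x) 1 *)
Definition is_cocycle (H : algType K) (D : H -> seq (H * H)) (L : H -> H) : Prop :=
  forall x, teq2 (D (L x)) ([seq (p.1, L p.2) | p <- D x] ++ [:: (L x, 1)]).

Definition deltaH (H : algType K) (D : H -> seq (H * H)) (alpha : H -> K) (x : H) : H :=
  \sum_(p <- D x) alpha p.2 *: p.1 - alpha x *: 1.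

End HR2.

From mathcomp Require Import all_boot all_order all_algebra.
Import GRing.Theory.
Local Open Scope ring_scope.

(* Write psi := phi_L o theta, i.e. psi f = extHR phi_L (theta f), the
   linear extension of phi_L applied to theta f.  The map phi_{L+delta alpha}
   is characterised by the universal property of H_R: it is the only map on
   forests sending the empty forest to 1, concatenation to products, and
   B_+ f to (L + delta alpha) of its value on f (lemma [phi_rec_unique],
   proved by mutual induction on trees and forests).  So it suffices to show
   that psi satisfies these equations ([pushforward_theta_rec]).  Unitality
   and multiplicativity transfer from theta because the linear extension of
   the algebra morphism phi_L is multiplicative and respects the equality of
   H_R.  For B_+, theta (B_+ f) = B_+ (theta f) + delta_beta (theta f) with
   beta = alpha o phi_L; the first summand is sent to L (psi f) since
   phi_L o B_+ = L o phi_L, and the second to delta_alpha (psi f) because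
   phi_L is a morphism of coalgebras ([phi_comul]: a cocycle L makes
   phi_L commute with the coproducts), which gives
   phi_L o delta_{alpha o phi_L} = delta_alpha o phi_L ([ext_delta]). *)

Set Implicit Arguments.
Unset Strict Implicit.

Section Linearity.
Variables (K : fieldType) (U V : lmodType K) (f : U -> V).
Hypothesis flin : linmap f.

Lemma linmap0 : f 0 = 0.
Proof.
have := flin 1 0 0; rewrite !scale1r addr0 => f00.
by apply: (@addrI _ (f 0)); rewrite addr0 -f00.
Qed.

Lemma linmapD x y : f (x + y) = f x + f y.
Proof. by have := flin 1 x y; rewrite !scale1r. Qed.

Lemma linmapZ a x : f (a *: x) = a *: f x.
Proof. by have := flin a x 0; rewrite addr0 linmap0 addr0. Qed.

Lemma linmap_sum I (s : seq I) (F : I -> U) :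
  f (\sum_(i <- s) F i) = \sum_(i <- s) f (F i).
Proof.
elim: s => [|i s IHs]; first by rewrite !big_nil linmap0.
by rewrite !big_cons linmapD IHs.
Qed.

End Linearity.

Lemma linform_linmap (K : fieldType) (U : lmodType K) (f : U -> K) :
  linform f -> @linmap K U K^o f.
Proof. by []. Qed.

Section Tensors.
Variable K : fieldType.

Lemma teq2_trans (U V : lmodType K) (s t u : seq (U * V)) :
  teq2 s t -> teq2 t u -> teq2 s u.
Proof. by move=> st tu W B Bbil; rewrite st // tu. Qed.

Lemma teq2_prod (A : algType K) (s s' t t' : seq (A * A)) :
  teq2 s s' -> teq2 t t' ->
  teq2 [seq (p.1 * q.1, p.2 * q.2) | p <- s, q <- t]
       [seq (p.1 * q.1, p.2 * q.2) | p <- s', q <- t'].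
Proof.
move=> ss' tt' W B [Bl Br]; rewrite !big_allpairs_dep /=.
transitivity (\sum_(p <- s) \sum_(q <- t') B (p.1 * q.1) (p.2 * q.2)).
  apply: eq_bigr => p _; apply: (tt' W (fun u v => B (p.1 * u) (p.2 * v))).
  by split=> *; rewrite mulrDr -scalerAr (Bl, Br).
rewrite exchange_big [in RHS]exchange_big; apply: eq_bigr => q _ /=.
apply: (ss' W (fun u v => B (u * q.1) (v * q.2))).
by split=> *; rewrite mulrDl -scalerAl (Bl, Br).
Qed.

Lemma bilin_compr (U V W : lmodType K) (B : U -> V -> W) (h : V -> V) :
  linmap h -> bilin B -> bilin (fun u v => B u (h v)).
Proof. by move=> hlin [Bl Br]; split=> *; rewrite ?hlin (Bl, Br). Qed.

Lemma bilin_contract (U : lmodType K) (alpha : U -> K) :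
  linform alpha -> bilin (fun u v : U => alpha v *: u).
Proof.
move=> alpha_lin; split=> *; first by rewrite scalerDr !scalerA mulrC.
by rewrite alpha_lin scalerDl scalerA.
Qed.

End Tensors.

Section ForestInduction.
Variables (Pt : rtree -> Prop) (Pf : seq rtree -> Prop).
Hypothesis Pf_nil : Pf [::].
Hypothesis Pf_cons : forall t f, Pt t -> Pf f -> Pf (t :: f).
Hypothesis Pt_node : forall f, Pf f -> Pt (RNode f).

Fixpoint tree_ind (t : rtree) : Pt t :=
  match t return Pt t with
  | RNode ts => Pt_node
      ((fix forest (s : seq rtree) : Pf s :=
          match s return Pf s with
          | [::] => Pf_nil
          | u :: s' => Pf_cons (tree_ind u) (forest s')
          end) ts)
  end.

Lemma forest_ind (f : seq rtree) : Pf f.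
Proof. by elim: f => // t f; apply: Pf_cons (tree_ind t). Qed.

End ForestInduction.

Definition phi_rec (K : fieldType) (A : algType K) (M : A -> A)
    (g : seq rtree -> A) : Prop :=
  [/\ g [::] = 1,
      forall f f', g (f ++ f') = g f * g f' &
      forall f, g [:: RNode f] = M (g f)].

Lemma is_phi_rec (K : fieldType) (A : algType K) (M : A -> A)
    (g : seq rtree -> A) :
  is_phi M g -> phi_rec M g.
Proof. by case. Qed.

Lemma phi_rec_unique (K : fieldType) (A : algType K) (M : A -> A)
    (g1 g2 : seq rtree -> A) :
  phi_rec M g1 -> phi_rec M g2 -> forall f, g1 f = g2 f.
Proof.
case=> g1_nil g1_cat g1_node [g2_nil g2_cat g2_node].
apply: (@forest_ind (fun t => g1 [:: t] = g2 [:: t])) => [|t f eq_t eq_f | f eq_f].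
- by rewrite g1_nil g2_nil.
- by rewrite -cat1s g1_cat g2_cat eq_t eq_f.
- by rewrite g1_node g2_node eq_f.
Qed.

Section LinearExtension.
Variable K : fieldType.

Definition class_rep (R : seq (seq rtree)) (c : seq rtree) : seq rtree :=
  nth [::] R (index c (map canonF R)).

Lemma canonF_class_rep R c : c \in map canonF R -> canonF (class_rep R c) = c.
Proof.
move=> cR; rewrite /class_rep -(nth_map [::] (canonF [::])) ?nth_index //.
by rewrite -(size_map canonF) index_mem.
Qed.

Lemma extHR_classes (V : lmodType K) (g : seq rtree -> V)
    (g_iso : forall f f', iso f f' -> g f = g f') (R : seq (seq rtree)) (z : HR K) :
  {subset map snd z <= R} ->
  extHR g z = \sum_(c <- undup (map canonF R))
                coefHR z (class_rep R c) *: g (class_rep R c).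
Proof.
move=> zR; rewrite /extHR.
transitivity (\sum_(p <- z) \sum_(c <- undup (map canonF R))
                 (if c == canonF p.2 then p.1 *: g (class_rep R c) else 0)).
  rewrite [LHS]big_seq [RHS]big_seq; apply: eq_bigr => p pz.
  have pR : canonF p.2 \in undup (map canonF R).
    by rewrite mem_undup map_f // zR // map_f.
  rewrite -big_mkcond -big_filter filter_pred1_uniq ?undup_uniq // big_seq1.
  congr (_ *: _); apply: g_iso.
  by rewrite /iso canonF_class_rep // -mem_undup.
rewrite exchange_big; apply: eq_big_seq => c cR.
rewrite /coefHR scaler_suml [RHS]big_mkcond; apply: eq_bigr => p _.
rewrite /iso canonF_class_rep; last by rewrite -mem_undup.
by rewrite eq_sym; case: eqP.
Qed.

Lemma extHR_eqHR (V : lmodType K) (g : seq rtree -> V)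
    (g_iso : forall f f', iso f f' -> g f = g f') (x y : HR K) :
  eqHR x y -> extHR g x = extHR g y.
Proof.
move=> xy; have [xR yR] : {subset map snd x <= map snd (x ++ y)} /\
                          {subset map snd y <= map snd (x ++ y)}.
  by split=> u; rewrite map_cat mem_cat => ->; rewrite ?orbT.
rewrite (extHR_classes g_iso xR) (extHR_classes g_iso yR).
by apply: eq_bigr => c _; rewrite xy.
Qed.

Lemma extHR_add (V : lmodType K) (g : seq rtree -> V) (x y : HR K) :
  extHR g (addHR x y) = extHR g x + extHR g y.
Proof. exact: big_cat. Qed.

Lemma extHR_bplus (V : lmodType K) (g : seq rtree -> V) (M : V -> V) :
  linmap M ->
  (forall f, g [:: RNode f] = M (g f)) ->
  forall x, extHR g (bplusHR x) = M (extHR g x).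
Proof.
move=> Mlin g_node x; rewrite /extHR big_map linmap_sum //.
by apply: eq_bigr => p _; rewrite g_node linmapZ.
Qed.

Lemma linform_extHR (V : lmodType K) (g : seq rtree -> V) (alpha : V -> K) :
  linform alpha ->
  forall x, alpha (extHR g x) = extK (fun f => alpha (g f)) x.
Proof.
move=> alpha_lin x; have alpha_lin' := linform_linmap alpha_lin.
rewrite /extHR (linmap_sum alpha_lin'); apply: eq_bigr => p _.
exact: (linmapZ alpha_lin').
Qed.

Section AlgebraTarget.
Variables (A : algType K) (g : seq rtree -> A).

Lemma extHR_one : g [::] = 1 -> extHR g (oneHR K) = 1.
Proof. by move=> g_nil; rewrite /extHR big_seq1 g_nil scale1r. Qed.

Lemma extHR_mul :
  (forall f f', g (f ++ f') = g f * g f') ->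
  forall x y, extHR g (mulHR x y) = extHR g x * extHR g y.
Proof.
move=> g_cat x y; rewrite /extHR big_allpairs_dep big_distrl.
apply: eq_bigr => p _; rewrite big_distrr; apply: eq_bigr => q _ /=.
by rewrite g_cat -scalerAl -scalerAr scalerA.
Qed.

End AlgebraTarget.
End LinearExtension.

Lemma copF_cons (t : rtree) (f : seq rtree) :
  copF (t :: f) = [seq (p.1 ++ q.1, p.2 ++ q.2) | p <- copT t, q <- copF f].
Proof. by []. Qed.

Lemma copT_node (f : seq rtree) :
  copT (RNode f) = ([:: RNode f], [::]) :: [seq (p.1, [:: RNode p.2]) | p <- copF f].
Proof. by []. Qed.

Section Coalgebra.
Variables (K : fieldType) (H : algType K) (D : H -> seq (H * H)).
Hypothesis D_lin : forall a x y,
  teq2 (D (a *: x + y)) ([seq (a *: p.1, p.2) | p <- D x] ++ D y).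
Hypothesis D_mul : forall x y,
  teq2 (D (x * y)) [seq (p.1 * q.1, p.2 * q.2) | p <- D x, q <- D y].
Hypothesis D_one : teq2 (D 1) [:: (1, 1)].
Variables (L : H -> H) (phiL : seq rtree -> H) (alpha : H -> K).
Hypotheses (L_lin : linmap L) (L_coc : is_cocycle D L).
Hypotheses (phiL_rec : phi_rec L phiL) (alpha_lin : linform alpha).

(* Below, a tensor  u (x) v  is paired with a bilinear map B as  B u v. *)
Lemma coproduct0 (W : lmodType K) (B : H -> H -> W) :
  bilin B -> \sum_(p <- D 0) B p.1 p.2 = 0.
Proof.
move=> Bbil; have := D_lin 1 0 0 Bbil.
rewrite scaler0 addr0 big_cat big_map.
under [X in _ = X + _]eq_bigr do rewrite scale1r.
by move/(canLR (addrK _)); rewrite subrr.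
Qed.

Lemma coproduct_sum (W : lmodType K) (B : H -> H -> W) :
  bilin B -> forall I (s : seq I) (a : I -> K) (h : I -> H),
  \sum_(p <- D (\sum_(i <- s) a i *: h i)) B p.1 p.2 =
  \sum_(i <- s) a i *: \sum_(p <- D (h i)) B p.1 p.2.
Proof.
move=> Bbil I s a h; elim: s => [|i s IHs]; first by rewrite !big_nil coproduct0.
rewrite !big_cons (D_lin _ _ _ Bbil) big_cat big_map IHs scaler_sumr; congr (_ + _).
by apply: eq_bigr => p _; rewrite (linmapZ (f := B^~ p.2) (Bbil.1 p.2)).
Qed.

Lemma phi_comul (f : seq rtree) :
  teq2 (D (phiL f)) [seq (phiL q.1, phiL q.2) | q <- copF f].
Proof.
have [phi_nil phi_cat phi_node] := phiL_rec.
elim/(@forest_ind (fun t =>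
        teq2 (D (phiL [:: t])) [seq (phiL q.1, phiL q.2) | q <- copT t])): f
  => [|t f Dt Df | f Df].
- by rewrite /= phi_nil.
- have -> : phiL (t :: f) = phiL [:: t] * phiL f by rewrite -phi_cat.
  apply: teq2_trans (D_mul _ _) (teq2_trans (teq2_prod Dt Df) _) => W B _.
  rewrite copF_cons map_allpairs allpairs_mapl allpairs_mapr.
  by congr (\sum_(_ <- _) _); apply: eq_allpairs => p q /=; rewrite !phi_cat.
- rewrite phi_node; apply: teq2_trans (L_coc _) _ => W B Bbil.
  rewrite copT_node /= big_cat big_seq1 big_cons phi_node phi_nil addrC !big_map.
  congr (_ + _); rewrite (Df W _ (bilin_compr L_lin Bbil)) big_map.
  by apply: eq_bigr => q _; rewrite /= phi_node.
Qed.

Lemma ext_delta (x : HR K) :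
  extHR phiL (deltaHR (fun f => alpha (phiL f)) x) = deltaH D alpha (extHR phiL x).
Proof.
have [phi_nil _ _] := phiL_rec.
have alpha_bil := bilin_contract alpha_lin.
rewrite /deltaHR /deltaH {1}/extHR big_cat big_seq1 /= phi_nil.
rewrite -(linform_extHR _ alpha_lin) scaleNr; congr (_ - _).
rewrite big_flatten big_map /extHR.
rewrite (coproduct_sum alpha_bil x (fun p => p.1) (fun p => phiL p.2)).
apply: eq_bigr => p _; rewrite big_map (phi_comul p.2 alpha_bil) big_map.
by rewrite scaler_sumr; apply: eq_bigr => q _; rewrite scalerA.
Qed.

Lemma pushforward_theta_rec (theta : seq rtree -> HR K) :
  (forall f f', iso f f' -> phiL f = phiL f') ->
  is_theta (fun f => alpha (phiL f)) theta ->
  phi_rec (fun x => L x + deltaH D alpha x) (fun f => extHR phiL (theta f)).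
Proof.
move=> phiL_iso [_ theta_nil theta_cat theta_node].
have [phi_nil phi_cat phi_node] := phiL_rec.
have ext_eq := extHR_eqHR phiL_iso.
split=> [|f f'|f].
- by rewrite (ext_eq _ _ theta_nil) extHR_one.
- by rewrite (ext_eq _ _ (theta_cat f f')) extHR_mul.
- by rewrite (ext_eq _ _ (theta_node f)) extHR_add (extHR_bplus L_lin phi_node) ext_delta.
Qed.

End Coalgebra.

Unset Implicit Arguments.

Theorem mainTheorem14 (K : fieldType) (charK0 : [pchar K] =i pred0)
  (H : algType K) (D : H -> seq (H * H)) (e : H -> K)
  (bialgH : is_bialgebra D e)
  (L : H -> H) (Llin : linmap L) (Lcoc : is_cocycle D L)
  (alpha : H -> K) (alphalin : linform alpha)
  (phiL phiLa : seq rtree -> H) (theta : seq rtree -> HR K) :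
  is_phi L phiL ->
  is_phi (fun x => L x + deltaH D alpha x) phiLa ->
  is_theta (fun f => alpha (phiL f)) theta ->
  forall f : seq rtree, phiLa f = extHR phiL (theta f).
Proof.
move=> phiL_phi phiLa_phi theta_def.
have [D_lin _ _ D_mul_one _] := bialgH.
have [phiL_iso _ _ _] := phiL_phi.
apply: phi_rec_unique (is_phi_rec phiLa_phi) _.
exact: (pushforward_theta_rec D_lin (fun x y => (D_mul_one x y).1)
          (D_mul_one 1 1).2 Llin Lcoc (is_phi_rec phiL_phi) alphalin phiL_iso theta_def).
Qed.
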